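(* Assume $\rho>\rho_1$. Then there is a homeomorphism $h:\widetilde X\to[0,1]$ such that $h\circ\widetilde f\circ h^{-1}$ is an increasing homeomorphism of $[0,1]$ whose fixed points are $0$ and $1$ (corresponding to $(\omega_0,\omega_0,\dots)$ and $(1,1,\dots)$). In particular $\widetilde X_{T_\infty}=\{(\omega_0,\omega_0,\dots)\}$, where $T_\infty=(0,0,0,\dots)$.
   Context: Standing setup. Fix real numbers $\rho,\delta,\gamma,\alpha$ with $0<\rho<1$, $\delta>0$, $\gamma>-\delta/\rho$, $-\delta/\rho<\alpha<0$. Define $f:[0,1]\to[0,1]$ by $f(x)=f_0(x):=\frac{\alpha x-\alpha\rho}{\gamma x+\delta}$ for $x\in[0,\rho]$ and $f(x)=f_1(x):=\frac{x-\rho}{1-\rho}$ for $x\in(\rho,1]$. Put $\rho_1:=f_0(0)$; $\omega_0$ denotes the fixed point of $f$ in $[0,\rho)$. The inverse limit is $\widetilde X=\{(x_0,x_1,\dots)\in[0,1]^{\mathbb N}: f(x_{n+1})=x_n \ \forall n\}$ with the product topology; the shift is $\widetilde f(x_0,x_1,\dots)=(f(x_0),x_0,x_1,\dots)$. A point $\widetilde x=(x_0,x_1,\dots)$ is of type $T\in\{0,1\}^{\mathbb N}$ if $x_{n+1}\in[0,\rho]$ whenever $T(n)=0$ and $x_{n+1}\in(\rho,1]$ whenever $T(n)=1$; $\widetilde X_T$ is the set of points of type $T$. *)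

From Stdlib Require Import Reals Lra.
Open Scope R_scope.

Definition f0 (rho delta gamma alpha x : R) : R :=
  (alpha * x - alpha * rho) / (gamma * x + delta).
Definition f1 (rho x : R) : R := (x - rho) / (1 - rho).
Definition fmap (rho delta gamma alpha x : R) : R :=
  if Rle_dec x rho then f0 rho delta gamma alpha x else f1 rho x.

Definition rho1 (rho delta gamma alpha : R) : R := f0 rho delta gamma alpha 0.

Definition seqR := nat -> R.

Definition in_invlim (f : R -> R) (x : seqR) : Prop :=
  (forall n, 0 <= x n <= 1) /\ (forall n, f (x (S n)) = x n).

Definition shift (f : R -> R) (x : seqR) : seqR :=
  fun n => match n with O => f (x O) | S m => x m end.

(* Type T in {0,1}^N, encoded by false = 0, true = 1. *)
Definition of_type (rho : R) (T : nat -> bool) (x : seqR) : Prop :=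
  forall n, (T n = false -> 0 <= x (S n) <= rho) /\
            (T n = true -> rho < x (S n) <= 1).

Definition T_infty : nat -> bool := fun _ => false.

(* Continuity of h : X~ -> R, X~ carrying the subspace topology of the
   product topology on [0,1]^N (basic neighbourhoods = cylinders). *)
Definition cont_on_invlim (P : seqR -> Prop) (h : seqR -> R) : Prop :=
  forall x, P x -> forall eps, eps > 0 ->
    exists (N : nat) (d : R), d > 0 /\
      forall y, P y -> (forall n, (n <= N)%nat -> Rabs (y n - x n) < d) ->
        Rabs (h y - h x) < eps.

(* Continuity of k : [0,1] -> [0,1]^N (product topology on the target,
   basic neighbourhoods = cylinders). *)
Definition cont_interval_to_seq (k : R -> seqR) : Prop :=
  forall t, 0 <= t <= 1 -> forall (eps : R) (N : nat), eps > 0 ->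
    exists d, d > 0 /\
      forall s, 0 <= s <= 1 -> Rabs (s - t) < d ->
        forall n, (n <= N)%nat -> Rabs (k s n - k t n) < eps.

Definition cont_interval (g : R -> R) : Prop :=
  forall t, 0 <= t <= 1 -> forall eps, eps > 0 ->
    exists d, d > 0 /\
      forall s, 0 <= s <= 1 -> Rabs (s - t) < d -> Rabs (g s - g t) < eps.

From Stdlib Require Import Reals Lra Psatz ClassicalEpsilon FunctionalExtensionality Lia.
Open Scope R_scope.

(* Going backwards along a point x of the inverse limit, once a coordinate exceeds rho1 all
   later coordinates lie in (rho, 1], where f is the affine branch f1; hence
   lambda(x) = (1 - x_m) / (1 - rho)^m is the same for every m with x_m > rho1.  A point whose
   coordinates never exceed rho1 is the constant sequence at omega0, because f o f contracts
   [0, rho] towards omega0.  So h(x) = 1 / (1 + lambda(x)), with h(omega0, omega0, ...) = 0, is a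
   bijection onto [0, 1]; the shift divides lambda by 1 - rho, which turns it into the Moebius map
   t |-> (1 - rho) t / (1 - rho t). *)

Lemma invlim_iter (f : R -> R) (x : seqR) (k n : nat) :
  in_invlim f x -> Nat.iter k f (x (n + k)%nat) = x n.
Proof.
  intros [_ Hx]. revert n. induction k as [|k IH]; intros n.
  - simpl. now rewrite Nat.add_0_r.
  - rewrite Nat.iter_succ_r. replace (n + S k)%nat with (S (n + k)) by lia.
    rewrite Hx. apply IH.
Qed.

Lemma shift_invlim (f : R -> R) (x : seqR) :
  (forall y, 0 <= y <= 1 -> 0 <= f y <= 1) -> in_invlim f x -> in_invlim f (shift f x).
Proof. intros Hf [Hb Hx]. split; intros [|n]; simpl; auto. Qed.

Lemma iter_stable (g : R -> R) (a b : R) :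
  (forall x, a <= x <= b -> a <= g x <= b) ->
  forall n x, a <= x <= b -> a <= Nat.iter n g x <= b.
Proof. intros Hg n x Hx. induction n as [|n IH]; simpl; auto. Qed.

Lemma iter_lipschitz (g : R -> R) (K a b : R) :
  0 <= K -> (forall x, a <= x <= b -> a <= g x <= b) ->
  (forall x y, a <= x <= b -> a <= y <= b -> Rabs (g x - g y) <= K * Rabs (x - y)) ->
  forall n x y, a <= x <= b -> a <= y <= b ->
    Rabs (Nat.iter n g x - Nat.iter n g y) <= K ^ n * Rabs (x - y).
Proof.
  intros HK Hg Hlip n x y Hx Hy. induction n as [|n IH]; simpl; [lra|].
  eapply Rle_trans; [apply Hlip; apply iter_stable; auto|].
  rewrite Rmult_assoc. apply Rmult_le_compat_l; assumption.
Qed.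

Lemma lipschitz_glue (g : R -> R) (K a c b : R) :
  (forall x y, a <= x <= c -> a <= y <= c -> Rabs (g x - g y) <= K * Rabs (x - y)) ->
  (forall x y, c <= x <= b -> c <= y <= b -> Rabs (g x - g y) <= K * Rabs (x - y)) ->
  forall x y, a <= x <= b -> a <= y <= b -> Rabs (g x - g y) <= K * Rabs (x - y).
Proof.
  intros Hl Hr.
  assert (Hord : forall x y, a <= x <= b -> a <= y <= b -> x <= y ->
            Rabs (g x - g y) <= K * Rabs (x - y)).
  { intros x y Hx Hy Hxy.
    destruct (Rle_dec y c); [apply Hl; lra|].
    destruct (Rle_dec c x); [apply Hr; lra|].
    pose proof (Hl x c ltac:(lra) ltac:(lra)) as Hxc.
    pose proof (Hr c y ltac:(lra) ltac:(lra)) as Hcy.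
    pose proof (Rabs_triang (g x - g c) (g c - g y)) as Htri.
    replace (g x - g c + (g c - g y)) with (g x - g y) in Htri by ring.
    rewrite (Rabs_left1 (x - c)) in Hxc by lra.
    rewrite (Rabs_left1 (c - y)) in Hcy by lra.
    rewrite (Rabs_left1 (x - y)) by lra. lra. }
  intros x y Hx Hy. destruct (Rle_dec x y); [auto|].
  rewrite Rabs_minus_sym, (Rabs_minus_sym x). apply Hord; auto; lra.
Qed.

Lemma pow_antimono c j k : 0 <= c <= 1 -> (j <= k)%nat -> c ^ k <= c ^ j.
Proof.
  intros Hc Hjk. replace k with (j + (k - j))%nat by lia. rewrite pow_add.
  assert (c ^ (k - j) <= 1) by (rewrite <- (pow1 (k - j)); apply pow_incr; lra).
  pose proof (pow_le c j (proj1 Hc)). nra.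
Qed.

Lemma pow_lt_1_eventually q y : 0 <= q < 1 -> 0 < y -> exists N, q ^ N < y.
Proof.
  intros Hq Hy.
  destruct (pow_lt_1_zero q ltac:(rewrite Rabs_pos_eq; lra) y Hy) as [N HN].
  exists N. specialize (HN N (le_n N)). now rewrite Rabs_pos_eq in HN by (apply pow_le; lra).
Qed.

Lemma geometric_bound_eq0 q C a : 0 <= q < 1 -> (forall J, Rabs a <= q ^ J * C) -> a = 0.
Proof.
  intros Hq Ha. destruct (Req_dec a 0) as [|Hne]; [assumption|exfalso].
  pose proof (Rabs_pos_lt a Hne) as Hpos.
  assert (HC : 0 < C) by (pose proof (Ha 0%nat); simpl in *; lra).
  destruct (pow_lt_1_eventually q (Rabs a / C) Hq) as [N HN].
  { apply Rdiv_lt_0_compat; lra. }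
  assert (q ^ N * C < Rabs a).
  { replace (Rabs a) with (Rabs a / C * C) by (field; lra). apply Rmult_lt_compat_r; lra. }
  specialize (Ha N). lra.
Qed.

Lemma Rabs_div_le z p q m :
  0 < m -> m <= p -> m <= q -> Rabs (z / (p * q)) <= Rabs z / (m * m).
Proof.
  intros Hm Hp Hq. unfold Rdiv. rewrite Rabs_mult, Rabs_inv, (Rabs_pos_eq (p * q)) by nra.
  apply Rmult_le_compat_l; [apply Rabs_pos|]. apply Rinv_le_contravar; nra.
Qed.

Lemma exists_upcrossing (y : seqR) (c : R) (j k : nat) :
  y j <= c -> c < y (j + k)%nat -> exists i, (j <= i)%nat /\ y i <= c /\ c < y (S i).
Proof.
  revert j. induction k as [|k IH]; intros j Hj Hk.
  - rewrite Nat.add_0_r in Hk. lra.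
  - destruct (Rle_dec (y (S j)) c) as [Hle|Hgt].
    + destruct (IH (S j) Hle) as [i Hi].
      { now replace (S j + k)%nat with (j + S k)%nat by lia. }
      exists i. split; [lia|apply Hi].
    + exists j. split; [lia|split; lra].
Qed.

Lemma cont_interval_ext (g g' : R -> R) :
  (forall t, 0 <= t <= 1 -> g t = g' t) -> cont_interval g' -> cont_interval g.
Proof.
  intros Hext Hg' t Ht eps Heps. destruct (Hg' t Ht eps Heps) as [d [Hd Hclose]].
  exists d. split; [assumption|]. intros s Hs Hst. rewrite !Hext by assumption. auto.
Qed.

Definition t_of_level (L : R) : R := 1 / (1 + L).
Definition level_of_t (t : R) : R := (1 - t) / t.

Lemma t_of_level_range L : 0 <= L -> 0 < t_of_level L <= 1.
Proof.
  intros HL. unfold t_of_level. split; [apply Rdiv_lt_0_compat; lra|].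
  apply (Rmult_le_reg_r (1 + L)); [lra|]. unfold Rdiv. rewrite Rmult_assoc, Rinv_l; lra.
Qed.

Lemma level_of_t_nonneg t : 0 < t <= 1 -> 0 <= level_of_t t.
Proof.
  intros Ht. unfold level_of_t. apply Rmult_le_pos; [lra|]. left. apply Rinv_0_lt_compat. lra.
Qed.

Lemma level_of_t_of_level L : 0 <= L -> level_of_t (t_of_level L) = L.
Proof. intros HL. unfold level_of_t, t_of_level. field. lra. Qed.

Lemma t_of_level_of_t t : 0 < t -> t_of_level (level_of_t t) = t.
Proof. intros Ht. unfold level_of_t, t_of_level. field. lra. Qed.

Lemma t_of_level_lipschitz L1 L2 :
  0 <= L1 -> 0 <= L2 -> Rabs (t_of_level L1 - t_of_level L2) <= Rabs (L1 - L2).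
Proof.
  intros HL1 HL2. unfold t_of_level.
  replace (1 / (1 + L1) - 1 / (1 + L2)) with ((L2 - L1) / ((1 + L1) * (1 + L2)))
    by (field; lra).
  eapply Rle_trans; [apply (Rabs_div_le _ _ _ 1); lra|].
  rewrite Rabs_minus_sym. lra.
Qed.

Lemma t_of_level_le_inv L : 0 < L -> t_of_level L <= / L.
Proof.
  intros HL. unfold t_of_level, Rdiv. rewrite Rmult_1_l. apply Rinv_le_contravar; lra.
Qed.

Lemma level_of_t_close s t :
  0 < t -> t / 2 <= s -> Rabs (level_of_t s - level_of_t t) <= 4 * Rabs (s - t) / (t * t).
Proof.
  intros Ht Hs. unfold level_of_t.
  replace ((1 - s) / s - (1 - t) / t) with ((t - s) / (s * t)) by (field; lra).
  eapply Rle_trans; [apply (Rabs_div_le _ _ _ (t / 2)); lra|].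
  rewrite Rabs_minus_sym. right. field. lra.
Qed.

Definition coded_shift (r t : R) : R := (1 - r) * t / (1 - r * t).

Lemma coded_shift_sub r s t : 0 < r < 1 -> 0 <= s <= 1 -> 0 <= t <= 1 ->
  coded_shift r s - coded_shift r t = (s - t) * (1 - r) / ((1 - r * s) * (1 - r * t)).
Proof. intros. unfold coded_shift. field. split; nra. Qed.

Lemma coded_shift_range r t : 0 < r < 1 -> 0 <= t <= 1 -> 0 <= coded_shift r t <= 1.
Proof.
  intros Hr Ht. unfold coded_shift. assert (0 < 1 - r * t) by nra. split.
  - apply Rmult_le_pos; [nra|]. left. apply Rinv_0_lt_compat. lra.
  - apply (Rmult_le_reg_r (1 - r * t)); auto. unfold Rdiv. rewrite Rmult_assoc, Rinv_l by lra. nra.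
Qed.

Lemma coded_shift_increasing r s t :
  0 < r < 1 -> 0 <= s <= 1 -> 0 <= t <= 1 -> s < t -> coded_shift r s < coded_shift r t.
Proof.
  intros Hr Hs Ht Hst. apply Rminus_lt. rewrite coded_shift_sub by auto.
  assert (0 < 1 - r * s) by nra. assert (0 < 1 - r * t) by nra.
  assert (0 < / ((1 - r * s) * (1 - r * t))) by (apply Rinv_0_lt_compat; nra).
  assert ((s - t) * (1 - r) < 0) by nra.
  unfold Rdiv. nra.
Qed.

Lemma coded_shift_surjective r u :
  0 < r < 1 -> 0 <= u <= 1 -> exists t, 0 <= t <= 1 /\ coded_shift r t = u.
Proof.
  intros Hr Hu. exists (u / (1 - r + r * u)). assert (0 < 1 - r + r * u) by nra.
  split; [split|].
  - apply Rmult_le_pos; [lra|]. left. apply Rinv_0_lt_compat. lra.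
  - apply (Rmult_le_reg_r (1 - r + r * u)); auto.
    unfold Rdiv. rewrite Rmult_assoc, Rinv_l by lra. nra.
  - unfold coded_shift. field. repeat split; try lra; nra.
Qed.

Lemma coded_shift_continuous r : 0 < r < 1 -> cont_interval (coded_shift r).
Proof.
  intros Hr t Ht eps Heps. exists (eps * (1 - r)). split; [nra|].
  intros s Hs Hst. rewrite coded_shift_sub by auto.
  eapply Rle_lt_trans; [apply (Rabs_div_le _ _ _ (1 - r)); nra|].
  rewrite Rabs_mult, (Rabs_pos_eq (1 - r)) by lra.
  apply (Rmult_lt_reg_r ((1 - r) * (1 - r))); [nra|]. unfold Rdiv.
  rewrite Rmult_assoc, Rinv_l, Rmult_1_r by nra. nra.
Qed.

Lemma coded_shift_fixed r t :
  0 < r < 1 -> 0 <= t <= 1 -> (coded_shift r t = t <-> t = 0 \/ t = 1).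
Proof.
  intros Hr Ht. assert (0 < 1 - r * t) by nra. unfold coded_shift. split.
  - intros E. assert (Hprod : r * t * (t - 1) = 0).
    { assert (E2 : (1 - r) * t = t * (1 - r * t)) by (rewrite <- E at 2; field; lra). nra. }
    destruct (Rmult_integral _ _ Hprod) as [E3|E3]; [|right; lra].
    destruct (Rmult_integral _ _ E3); [lra|left; auto].
  - intros [-> | ->]; field; lra.
Qed.

Section InverseLimit.

Variables rho delta gamma alpha omega0 : R.
Hypothesis Hrho : 0 < rho < 1.
Hypothesis Hdelta : 0 < delta.
Hypothesis Hgamma : gamma > - delta / rho.
Hypothesis Halpha : alpha < 0.
Hypothesis Homega : 0 <= omega0 < rho.
Hypothesis Hfix : fmap rho delta gamma alpha omega0 = omega0.
Hypothesis Hrho1 : rho > rho1 rho delta gamma alpha.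

Local Notation f := (fmap rho delta gamma alpha).
Local Notation F0 := (f0 rho delta gamma alpha).
Local Notation r1 := (rho1 rho delta gamma alpha).
Local Notation dmin := (Rmin delta (gamma * rho + delta)).

Lemma denom_rho_pos : 0 < gamma * rho + delta.
Proof. assert (- delta / rho * rho = - delta) by (field; lra). nra. Qed.

Lemma dmin_pos : 0 < dmin.
Proof. pose proof denom_rho_pos. apply Rmin_glb_lt; lra. Qed.

Lemma denom_ge_dmin x : 0 <= x <= rho -> dmin <= gamma * x + delta.
Proof.
  intros Hx. destruct (Rle_dec 0 gamma).
  - pose proof (Rmin_l delta (gamma * rho + delta)). nra.
  - pose proof (Rmin_r delta (gamma * rho + delta)). nra.
Qed.

Lemma denom_pos x : 0 <= x <= rho -> 0 < gamma * x + delta.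
Proof. intros Hx. pose proof dmin_pos. pose proof (denom_ge_dmin x Hx). lra. Qed.

Lemma f0_sub x y : gamma * x + delta <> 0 -> gamma * y + delta <> 0 ->
  F0 x - F0 y =
    alpha * (gamma * rho + delta) * (x - y) / ((gamma * x + delta) * (gamma * y + delta)).
Proof. intros. unfold f0. field. auto. Qed.

Lemma f0_rho : F0 rho = 0.
Proof.
  pose proof denom_rho_pos. unfold f0. replace (alpha * rho - alpha * rho) with 0 by ring.
  field. lra.
Qed.

Lemma rho1_pos : 0 < r1.
Proof.
  unfold rho1, f0.
  replace ((alpha * 0 - alpha * rho) / (gamma * 0 + delta)) with (- alpha * rho / delta)
    by (field; lra).
  apply Rdiv_lt_0_compat; nra.
Qed.

Lemma f0_maps_into x : 0 <= x <= rho -> 0 <= F0 x <= r1.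
Proof.
  intros Hx. pose proof (denom_pos x Hx). pose proof denom_rho_pos. split.
  - unfold f0. apply Rmult_le_pos; [nra|]. left. apply Rinv_0_lt_compat. lra.
  - unfold rho1. apply Rminus_le. rewrite f0_sub by lra.
    assert (0 < / ((gamma * x + delta) * (gamma * 0 + delta))) by (apply Rinv_0_lt_compat; nra).
    assert (alpha * (gamma * rho + delta) < 0) by nra.
    assert (alpha * (gamma * rho + delta) * (x - 0) <= 0) by nra.
    unfold Rdiv. nra.
Qed.

Lemma f0_pos x : 0 <= x < rho -> 0 < F0 x.
Proof.
  intros Hx. pose proof (denom_pos x ltac:(lra)). unfold f0. apply Rdiv_lt_0_compat; nra.
Qed.

Lemma fmap_left x : x <= rho -> f x = F0 x.
Proof. intros Hx. unfold fmap. destruct (Rle_dec x rho); [reflexivity|lra]. Qed.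

Lemma fmap_right x : rho <= x -> f x = f1 rho x.
Proof.
  intros Hx. unfold fmap. destruct (Rle_dec x rho); [|reflexivity].
  replace x with rho by lra. rewrite f0_rho. unfold f1. field. lra.
Qed.

Lemma fmap_maps_left x : 0 <= x <= rho -> 0 <= f x <= rho.
Proof. intros Hx. rewrite fmap_left by lra. pose proof (f0_maps_into x Hx). lra. Qed.

Lemma fmap_maps_unit x : 0 <= x <= 1 -> 0 <= f x <= 1.
Proof.
  intros Hx. destruct (Rle_dec x rho).
  - pose proof (fmap_maps_left x ltac:(lra)). lra.
  - rewrite fmap_right by lra. unfold f1. split.
    + left. apply Rdiv_lt_0_compat; lra.
    + apply (Rmult_le_reg_r (1 - rho)); [lra|]. unfold Rdiv. rewrite Rmult_assoc, Rinv_l; lra.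
Qed.

Lemma f0_omega0 : F0 omega0 = omega0.
Proof. rewrite <- fmap_left by lra. exact Hfix. Qed.

Lemma omega0_pos : 0 < omega0.
Proof. rewrite <- f0_omega0. apply f0_pos. exact Homega. Qed.

Lemma omega0_le_rho1 : omega0 <= r1.
Proof. rewrite <- f0_omega0. apply f0_maps_into. lra. Qed.

Lemma invlim_const_omega0 : in_invlim f (fun _ => omega0).
Proof. split; intros; [lra|exact Hfix]. Qed.

(* [chord_den x = (gamma x + delta) (gamma (F0 x) + delta)] is affine in [x], so the slope of
   the chord of [F0 o F0] from [omega0] is extremal at an endpoint of [[0, rho]]. *)
Definition chord_den (x : R) : R :=
  gamma * (alpha + delta) * x + delta * delta - gamma * alpha * rho.
Definition chord_slope (x : R) : R :=
  (alpha * (gamma * rho + delta)) ^ 2 / (gamma * omega0 + delta) ^ 2 / chord_den x.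
Definition contraction : R := Rmax (chord_slope 0) (chord_slope rho).

Lemma chord_den_eq x : 0 <= x <= rho -> (gamma * x + delta) * (gamma * F0 x + delta) = chord_den x.
Proof. intros Hx. pose proof (denom_pos x Hx). unfold f0, chord_den. field. lra. Qed.

Lemma chord_den_pos x : 0 <= x <= rho -> 0 < chord_den x.
Proof.
  intros Hx. rewrite <- chord_den_eq by assumption. pose proof rho1_pos.
  pose proof (f0_maps_into x Hx). pose proof (denom_pos (F0 x) ltac:(lra)).
  pose proof (denom_pos x Hx). nra.
Qed.

Lemma f0f0_chord x : 0 <= x <= rho -> F0 (F0 x) - omega0 = chord_slope x * (x - omega0).
Proof.
  intros Hx. pose proof (f0_maps_into x Hx). pose proof rho1_pos.
  pose proof (denom_pos x Hx). pose proof (denom_pos (F0 x) ltac:(lra)).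
  pose proof (denom_pos omega0 ltac:(lra)). pose proof (chord_den_pos x Hx).
  rewrite <- f0_omega0 at 1. rewrite f0_sub by lra.
  replace (F0 x - omega0) with (F0 x - F0 omega0) by (now rewrite f0_omega0).
  rewrite f0_sub by lra. unfold chord_slope. rewrite <- chord_den_eq by assumption.
  field. repeat split; lra.
Qed.

Lemma chord_slope_nonneg x : 0 <= x <= rho -> 0 <= chord_slope x.
Proof.
  intros Hx. pose proof (chord_den_pos x Hx). pose proof (denom_pos omega0 ltac:(lra)).
  unfold chord_slope. apply Rmult_le_pos; [|left; apply Rinv_0_lt_compat; lra].
  apply Rmult_le_pos; [apply pow2_ge_0|]. left. apply Rinv_0_lt_compat, pow_lt. lra.
Qed.

Lemma contraction_lt_1 : 0 <= contraction < 1.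
Proof.
  pose proof omega0_pos. pose proof rho1_pos.
  assert (Hlt0 : chord_slope 0 < 1).
  { pose proof (f0f0_chord 0 ltac:(lra)) as E.
    pose proof (f0_pos (F0 0) ltac:(pose proof (f0_maps_into 0 ltac:(lra)); lra)). nra. }
  assert (Hr : chord_slope rho < 1).
  { pose proof (f0f0_chord rho ltac:(lra)) as E.
    rewrite f0_rho in E. fold (rho1 rho delta gamma alpha) in E.
    nra. }
  pose proof (chord_slope_nonneg 0 ltac:(lra)) as Hnn.
  unfold contraction. split; [apply (Rle_trans _ _ _ Hnn), Rmax_l|]. apply Rmax_lub_lt; assumption.
Qed.

Lemma chord_slope_le_contraction x : 0 <= x <= rho -> chord_slope x <= contraction.
Proof.
  intros Hx. pose proof (chord_den_pos 0 ltac:(lra)). pose proof (chord_den_pos rho ltac:(lra)).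
  assert (Hnum : 0 <= (alpha * (gamma * rho + delta)) ^ 2 / (gamma * omega0 + delta) ^ 2).
  { pose proof (denom_pos omega0 ltac:(lra)). apply Rmult_le_pos; [apply pow2_ge_0|].
    left. apply Rinv_0_lt_compat, pow_lt. lra. }
  unfold contraction, chord_slope. destruct (Rle_dec 0 (gamma * (alpha + delta))).
  - eapply Rle_trans; [|apply Rmax_l]. apply Rmult_le_compat_l; [assumption|].
    apply Rinv_le_contravar; [assumption|]. unfold chord_den. nra.
  - eapply Rle_trans; [|apply Rmax_r]. apply Rmult_le_compat_l; [assumption|].
    apply Rinv_le_contravar; [assumption|]. unfold chord_den. nra.
Qed.

Lemma ff_contracts x : 0 <= x <= rho -> Rabs (f (f x) - omega0) <= contraction * Rabs (x - omega0).
Proof.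
  intros Hx. pose proof (f0_maps_into x Hx). pose proof rho1_pos.
  rewrite (fmap_left x), fmap_left by lra. rewrite f0f0_chord by assumption.
  rewrite Rabs_mult, Rabs_pos_eq by (apply chord_slope_nonneg; assumption).
  apply Rmult_le_compat_r; [apply Rabs_pos|]. apply chord_slope_le_contraction. assumption.
Qed.

Lemma iter_ff_contracts J x : 0 <= x <= rho ->
  Rabs (Nat.iter (2 * J) f x - omega0) <= contraction ^ J * Rabs (x - omega0).
Proof.
  pose proof contraction_lt_1. revert x. induction J as [|J IH]; intros x Hx; [simpl; lra|].
  replace (2 * S J)%nat with (2 * J + 2)%nat by lia. rewrite Nat.iter_add. simpl Nat.iter at 2.
  pose proof (fmap_maps_left x Hx). pose proof (fmap_maps_left (f x) ltac:(assumption)).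
  eapply Rle_trans; [apply IH; assumption|].
  pose proof (ff_contracts x Hx). pose proof (pow_le contraction J ltac:(lra)). simpl. nra.
Qed.

Lemma invlim_near_omega0 x n J : in_invlim f x -> x (n + 2 * J)%nat <= rho ->
  Rabs (x n - omega0) <= contraction ^ J * rho.
Proof.
  intros Hx Hle. rewrite <- (invlim_iter f x (2 * J) n Hx).
  pose proof (proj1 Hx (n + 2 * J)%nat).
  eapply Rle_trans; [apply iter_ff_contracts; lra|].
  pose proof contraction_lt_1. pose proof (pow_le contraction J ltac:(lra)).
  apply Rmult_le_compat_l; [assumption|]. apply Rabs_le; lra.
Qed.

Lemma invlim_below_rho x : in_invlim f x -> (forall n, x n <= rho) -> x = fun _ => omega0.
Proof.
  intros Hx Hle. apply functional_extensionality. intros n. apply Rminus_diag_uniq.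
  apply (geometric_bound_eq0 contraction rho); [apply contraction_lt_1|].
  intros J. apply invlim_near_omega0; auto.
Qed.

Lemma invlim_below_rho1 x : in_invlim f x -> (forall n, x n <= r1) -> x = fun _ => omega0.
Proof. intros Hx Hle. apply invlim_below_rho; [assumption|]. intros n. specialize (Hle n). lra. Qed.

Lemma escape_step x m : in_invlim f x -> r1 < x m ->
  rho < x (S m) /\ 1 - x (S m) = (1 - rho) * (1 - x m).
Proof.
  intros [Hb Hf] Hm. destruct (Rle_dec (x (S m)) rho) as [Hle|Hgt].
  - rewrite <- Hf, fmap_left in Hm by assumption.
    pose proof (f0_maps_into (x (S m)) ltac:(specialize (Hb (S m)); lra)). lra.
  - split; [lra|]. rewrite <- (Hf m), fmap_right by lra. unfold f1. field. lra.
Qed.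

Lemma escape_iter x m j : in_invlim f x -> r1 < x m ->
  r1 < x (m + j)%nat /\ 1 - x (m + j)%nat = (1 - rho) ^ j * (1 - x m).
Proof.
  intros Hx Hm. induction j as [|j [IH1 IH2]].
  - rewrite Nat.add_0_r. split; [assumption|simpl; ring].
  - replace (m + S j)%nat with (S (m + j)) by lia.
    destruct (escape_step x _ Hx IH1) as [Hgt E]. split; [lra|]. rewrite E, IH2. simpl. ring.
Qed.

Definition level (x : seqR) (m : nat) : R := (1 - x m) / (1 - rho) ^ m.

Lemma level_nonneg x m : in_invlim f x -> 0 <= level x m.
Proof.
  intros [Hb _]. specialize (Hb m). unfold level. apply Rmult_le_pos; [lra|].
  left. apply Rinv_0_lt_compat, pow_lt. lra.
Qed.

Lemma level_invariant x m m' : in_invlim f x -> r1 < x m -> r1 < x m' -> level x m = level x m'.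
Proof.
  intros Hx.
  assert (Hmono : forall k l, r1 < x k -> (k <= l)%nat -> level x k = level x l).
  { intros k l Hk Hkl. unfold level. replace l with (k + (l - k))%nat by lia.
    destruct (escape_iter x k (l - k) Hx Hk) as [_ E]. rewrite E, pow_add.
    field. split; apply pow_nonzero; lra. }
  intros Hm Hm'. destruct (Nat.le_ge_cases m m'); [auto|symmetry; auto].
Qed.

Definition escape_time (x : seqR) : nat := epsilon (inhabits 0%nat) (fun m => r1 < x m).

Definition coding (x : seqR) : R :=
  if Rlt_dec r1 (x (escape_time x)) then t_of_level (level x (escape_time x)) else 0.

Lemma coding_eq x m : in_invlim f x -> r1 < x m -> coding x = t_of_level (level x m).
Proof.
  intros Hx Hm. assert (He : r1 < x (escape_time x))
    by (apply (epsilon_spec (inhabits 0%nat) (fun m => r1 < x m)); eauto).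
  unfold coding. destruct (Rlt_dec _ _); [|contradiction]. now rewrite (level_invariant x _ m).
Qed.

Lemma coding_eq_0 x : (forall m, x m <= r1) -> coding x = 0.
Proof.
  intros Hle. unfold coding. destruct (Rlt_dec _ _) as [Hlt|]; [|reflexivity].
  specialize (Hle (escape_time x)). lra.
Qed.

Lemma coding_range x : in_invlim f x -> 0 <= coding x <= 1.
Proof.
  intros Hx. destruct (classic (exists m, r1 < x m)) as [[m Hm]|Hno].
  - rewrite (coding_eq x m) by assumption.
    pose proof (t_of_level_range _ (level_nonneg x m Hx)). lra.
  - rewrite coding_eq_0; [lra|]. intros m. apply Rnot_lt_le. eauto.
Qed.

Lemma upcrossing_gap y i : in_invlim f y -> y i <= rho -> rho < y (S i) ->
  (1 - rho) ^ 2 <= 1 - y (S i).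
Proof.
  intros [_ Hf] Hi HSi. rewrite <- (Hf i), fmap_right in Hi by lra. unfold f1 in Hi.
  assert (y (S i) - rho <= rho * (1 - rho)).
  { apply (Rmult_le_compat_r (1 - rho)) in Hi; [|lra]. unfold Rdiv in Hi.
    rewrite Rmult_assoc, Rinv_l, Rmult_1_r in Hi; lra. }
  simpl. nra.
Qed.

Lemma coding_le_of_below_rho y N : in_invlim f y -> y N <= rho ->
  coding y <= (1 - rho) ^ N / (1 - rho) ^ 2.
Proof.
  intros Hy HN. pose proof (pow_lt (1 - rho) N ltac:(lra)).
  pose proof (pow_lt (1 - rho) 2 ltac:(lra)).
  destruct (classic (exists m, r1 < y m)) as [[m Hm]|Hno].
  2: { rewrite coding_eq_0; [apply Rlt_le, Rdiv_lt_0_compat; assumption|].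
       intros k. apply Rnot_lt_le. eauto. }
  assert (Hfar : rho < y (N + S m)%nat).
  { replace (N + S m)%nat with (S (m + N)) by lia.
    apply (escape_step y); [assumption|]. apply escape_iter; assumption. }
  destruct (exists_upcrossing y rho N (S m) HN Hfar) as [i (HNi & Hi & HSi)].
  pose proof (upcrossing_gap y i Hy Hi HSi).
  pose proof (pow_lt (1 - rho) (S i) ltac:(lra)).
  pose proof (pow_antimono (1 - rho) N (S i) ltac:(lra) ltac:(lia)).
  assert (Hlev : (1 - rho) ^ 2 / (1 - rho) ^ N <= level y (S i)).
  { unfold level, Rdiv. apply Rle_trans with ((1 - rho) ^ 2 / (1 - rho) ^ S i).
    - apply Rmult_le_compat_l; [lra|]. apply Rinv_le_contravar; assumption.
    - apply Rmult_le_compat_r; [left; apply Rinv_0_lt_compat|]; assumption. }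
  assert (0 < (1 - rho) ^ 2 / (1 - rho) ^ N) by (apply Rdiv_lt_0_compat; assumption).
  rewrite (coding_eq y (S i)) by (auto; lra).
  eapply Rle_trans; [apply t_of_level_le_inv; lra|].
  replace ((1 - rho) ^ N / (1 - rho) ^ 2) with (/ ((1 - rho) ^ 2 / (1 - rho) ^ N)) by (field; lra).
  apply Rinv_le_contravar; assumption.
Qed.

Lemma coding_continuous : cont_on_invlim (in_invlim f) coding.
Proof.
  intros x Hx eps Heps. destruct (classic (exists m, r1 < x m)) as [[m Hm]|Hno].
  - pose proof (pow_lt (1 - rho) m ltac:(lra)).
    exists m, (Rmin (x m - r1) (eps * (1 - rho) ^ m)). split; [apply Rmin_glb_lt; nra|].
    intros y Hy Hclose. specialize (Hclose m (le_n m)).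
    pose proof (Rmin_l (x m - r1) (eps * (1 - rho) ^ m)).
    pose proof (Rmin_r (x m - r1) (eps * (1 - rho) ^ m)).
    destruct (Rabs_def2 _ _ Hclose).
    rewrite (coding_eq y m), (coding_eq x m) by (auto; lra).
    eapply Rle_lt_trans; [apply t_of_level_lipschitz; apply level_nonneg; assumption|].
    unfold level. replace ((1 - y m) / (1 - rho) ^ m - (1 - x m) / (1 - rho) ^ m)
      with ((x m - y m) / (1 - rho) ^ m) by (field; lra).
    unfold Rdiv. rewrite Rabs_mult, Rabs_inv, (Rabs_pos_eq ((1 - rho) ^ m)), Rabs_minus_sym by lra.
    apply (Rmult_lt_reg_r ((1 - rho) ^ m)); [assumption|].
    rewrite Rmult_assoc, Rinv_l, Rmult_1_r by lra. lra.
  - assert (Hle : forall n, x n <= r1) by (intros n; apply Rnot_lt_le; eauto).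
    pose proof (invlim_below_rho1 x Hx Hle) as ->. pose proof omega0_le_rho1.
    rewrite (coding_eq_0 (fun _ => omega0)) by (intros; assumption).
    destruct (pow_lt_1_eventually (1 - rho) (eps * (1 - rho) ^ 2) ltac:(lra)) as [N HN].
    { apply Rmult_lt_0_compat; [|apply pow_lt]; lra. }
    exists N, (rho - omega0). split; [lra|].
    intros y Hy Hclose. specialize (Hclose N (le_n N)). destruct (Rabs_def2 _ _ Hclose).
    pose proof (coding_le_of_below_rho y N Hy ltac:(lra)). pose proof (coding_range y Hy).
    rewrite Rminus_0_r, Rabs_pos_eq by lra.
    assert ((1 - rho) ^ N / (1 - rho) ^ 2 < eps).
    { pose proof (pow_lt (1 - rho) 2 ltac:(lra)).
      apply (Rmult_lt_reg_r ((1 - rho) ^ 2)); [assumption|].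
      unfold Rdiv. rewrite Rmult_assoc, Rinv_l, Rmult_1_r by lra. lra. }
    lra.
Qed.

Definition lip_const : R :=
  Rmax (Rabs alpha * (gamma * rho + delta) / (dmin * dmin)) (/ (1 - rho)).

Lemma lip_const_pos : 0 < lip_const.
Proof. apply (Rlt_le_trans _ (/ (1 - rho))); [apply Rinv_0_lt_compat; lra|apply Rmax_r]. Qed.

Lemma fmap_lipschitz : forall x y, 0 <= x <= 1 -> 0 <= y <= 1 ->
  Rabs (f x - f y) <= lip_const * Rabs (x - y).
Proof.
  apply (lipschitz_glue f lip_const 0 rho 1).
  - intros x y Hx Hy. rewrite !fmap_left by lra.
    pose proof (denom_ge_dmin x Hx). pose proof (denom_ge_dmin y Hy).
    pose proof dmin_pos. pose proof denom_rho_pos.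
    rewrite f0_sub by lra.
    eapply Rle_trans; [apply (Rabs_div_le _ _ _ dmin); assumption|].
    rewrite !Rabs_mult, (Rabs_pos_eq (gamma * rho + delta)) by lra.
    eapply Rle_trans; [|apply Rmult_le_compat_r; [apply Rabs_pos|apply Rmax_l]].
    right. field. lra.
  - intros x y Hx Hy. rewrite !fmap_right by lra. unfold f1.
    replace ((x - rho) / (1 - rho) - (y - rho) / (1 - rho)) with (/ (1 - rho) * (x - y))
      by (field; lra).
    rewrite Rabs_mult, (Rabs_pos_eq (/ (1 - rho))) by (left; apply Rinv_0_lt_compat; lra).
    apply Rmult_le_compat_r; [apply Rabs_pos|apply Rmax_r].
Qed.

Definition branch_point (L : R) (n : nat) : R := 1 - L * (1 - rho) ^ n.

Lemma branch_point_mono L j k : 0 <= L -> (j <= k)%nat -> branch_point L j <= branch_point L k.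
Proof.
  intros HL Hjk. unfold branch_point. pose proof (pow_antimono (1 - rho) j k ltac:(lra) Hjk). nra.
Qed.

Lemma branch_point_le_1 L n : 0 <= L -> branch_point L n <= 1.
Proof. intros HL. unfold branch_point. pose proof (pow_le (1 - rho) n ltac:(lra)). nra. Qed.

Lemma branch_point_close L L' n : Rabs (branch_point L n - branch_point L' n) <= Rabs (L - L').
Proof.
  unfold branch_point. replace (1 - L * (1 - rho) ^ n - (1 - L' * (1 - rho) ^ n))
    with (- (L - L') * (1 - rho) ^ n) by ring.
  pose proof (pow_antimono (1 - rho) 0 n ltac:(lra) ltac:(lia)).
  pose proof (pow_le (1 - rho) n ltac:(lra)).
  rewrite Rabs_mult, Rabs_Ropp, (Rabs_pos_eq ((1 - rho) ^ n)) by assumption.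
  simpl in *. pose proof (Rabs_pos (L - L')). nra.
Qed.

Lemma fmap_branch_point L j : 0 <= L -> 0 < branch_point L j ->
  f (branch_point L (S j)) = branch_point L j.
Proof.
  intros HL Hj. unfold branch_point in *. simpl.
  pose proof (pow_le (1 - rho) j ltac:(lra)).
  rewrite fmap_right by nra. unfold f1. field. lra.
Qed.

Lemma iter_branch_point L j i : 0 <= L -> 0 < branch_point L j ->
  Nat.iter i f (branch_point L (j + i)) = branch_point L j.
Proof.
  intros HL Hj. induction i as [|i IH]; [now rewrite Nat.add_0_r|].
  rewrite Nat.iter_succ_r. replace (j + S i)%nat with (S (j + i)) by lia.
  rewrite fmap_branch_point; [exact IH|assumption|].
  pose proof (branch_point_mono L j (j + i) HL ltac:(lia)). lra.
Qed.

Lemma branch_point_escapes L : 0 <= L -> exists M, r1 < branch_point L M.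
Proof.
  intros HL. destruct (pow_lt_1_eventually (1 - rho) ((1 - r1) / (L + 1)) ltac:(lra)) as [M HM].
  { apply Rdiv_lt_0_compat; lra. }
  exists M. pose proof (pow_le (1 - rho) M ltac:(lra)).
  assert ((1 - rho) ^ M * (L + 1) < 1 - r1).
  { replace (1 - r1) with ((1 - r1) / (L + 1) * (L + 1)) by (field; lra).
    apply Rmult_lt_compat_r; lra. }
  unfold branch_point. nra.
Qed.

Lemma iter_branch_point_indep L M M' n : 0 <= L ->
  r1 < branch_point L M -> r1 < branch_point L M' ->
  Nat.iter M f (branch_point L (n + M)) = Nat.iter M' f (branch_point L (n + M')).
Proof.
  intros HL. pose proof rho1_pos.
  assert (Hmono : forall k l, r1 < branch_point L k -> (k <= l)%nat ->
    Nat.iter k f (branch_point L (n + k)) = Nat.iter l f (branch_point L (n + l))).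
  { intros k l Hk Hkl. replace l with (k + (l - k))%nat by lia. rewrite Nat.iter_add.
    replace (n + (k + (l - k)))%nat with ((n + k) + (l - k))%nat by lia.
    rewrite (iter_branch_point L (n + k) (l - k)); [reflexivity|assumption|].
    pose proof (branch_point_mono L k (n + k) HL ltac:(lia)). lra. }
  intros HM HM'. destruct (Nat.le_ge_cases M M'); [auto|symmetry; auto].
Qed.

(* The guard [0 < t] matters: [level_of_t 0 = 1 / 0] is [0] in Rocq, not infinity. *)
Definition decoding (t : R) : seqR :=
  let L := level_of_t t in
  let M := epsilon (inhabits 0%nat) (fun M => r1 < branch_point L M) in
  if Rlt_dec 0 t then fun n => Nat.iter M f (branch_point L (n + M)) else fun _ => omega0.

Lemma decoding_eq t M n : 0 < t <= 1 -> r1 < branch_point (level_of_t t) M ->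
  decoding t n = Nat.iter M f (branch_point (level_of_t t) (n + M)).
Proof.
  intros Ht HM. pose proof (level_of_t_nonneg t Ht).
  unfold decoding. destruct (Rlt_dec 0 t); [|lra].
  apply iter_branch_point_indep; [assumption| |assumption].
  apply (epsilon_spec (inhabits 0%nat) (fun M => r1 < branch_point (level_of_t t) M)). eauto.
Qed.

Lemma decoding_0 : decoding 0 = fun _ => omega0.
Proof. unfold decoding. destruct (Rlt_dec 0 0); [lra|reflexivity]. Qed.

Lemma decoding_branch t n : 0 < t <= 1 -> 0 < branch_point (level_of_t t) n ->
  decoding t n = branch_point (level_of_t t) n.
Proof.
  intros Ht Hn. pose proof (level_of_t_nonneg t Ht).
  destruct (branch_point_escapes (level_of_t t)) as [M HM]; [assumption|].
  rewrite (decoding_eq t M) by assumption. apply iter_branch_point; assumption.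
Qed.

Lemma decoding_invlim t : 0 <= t <= 1 -> in_invlim f (decoding t).
Proof.
  intros Ht. destruct (Req_dec t 0) as [->|Ht0]; [rewrite decoding_0; apply invlim_const_omega0|].
  assert (Ht' : 0 < t <= 1) by lra. pose proof (level_of_t_nonneg t Ht'). pose proof rho1_pos.
  destruct (branch_point_escapes (level_of_t t)) as [M HM]; [assumption|].
  assert (Hbp : forall n, r1 < branch_point (level_of_t t) (n + M)).
  { intros n. eapply Rlt_le_trans; [exact HM|]. apply branch_point_mono; [assumption|lia]. }
  split; intros n; rewrite !(decoding_eq t M) by assumption; pose proof (Hbp n).
  - apply iter_stable; [exact fmap_maps_unit|]. split; [lra|]. apply branch_point_le_1. assumption.
  - rewrite <- Nat.iter_succ, Nat.iter_succ_r. f_equal.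
    replace (S n + M)%nat with (S (n + M)) by lia. apply fmap_branch_point; [assumption|lra].
Qed.

Lemma coding_decoding t : 0 <= t <= 1 -> coding (decoding t) = t.
Proof.
  intros Ht. destruct (Req_dec t 0) as [->|Ht0].
  { rewrite decoding_0. apply coding_eq_0. intros _. apply omega0_le_rho1. }
  assert (Ht' : 0 < t <= 1) by lra. pose proof (level_of_t_nonneg t Ht'). pose proof rho1_pos.
  destruct (branch_point_escapes (level_of_t t)) as [M HM]; [assumption|].
  assert (HxM : decoding t M = branch_point (level_of_t t) M) by (apply decoding_branch; lra).
  rewrite (coding_eq _ M); [|apply decoding_invlim; lra|now rewrite HxM].
  unfold level. rewrite HxM. unfold branch_point.
  replace ((1 - (1 - level_of_t t * (1 - rho) ^ M)) / (1 - rho) ^ M) with (level_of_t t)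
    by (field; apply pow_nonzero; lra).
  apply t_of_level_of_t. lra.
Qed.

Lemma decoding_coding x : in_invlim f x -> decoding (coding x) = x.
Proof.
  intros Hx. destruct (classic (exists m, r1 < x m)) as [[m Hm]|Hno].
  2: { assert (Hle : forall n, x n <= r1) by (intros n; apply Rnot_lt_le; eauto).
       rewrite coding_eq_0, decoding_0 by assumption.
       symmetry. apply invlim_below_rho1; assumption. }
  rewrite (coding_eq x m) by assumption.
  pose proof (level_nonneg x m Hx) as HL. pose proof (t_of_level_range _ HL).
  assert (HLt : level_of_t (t_of_level (level x m)) = level x m)
    by (apply level_of_t_of_level; assumption).
  assert (Hbp : forall k, (m <= k)%nat -> branch_point (level x m) k = x k).
  { intros k Hk. replace k with (m + (k - m))%nat by lia.
    destruct (escape_iter x m (k - m) Hx Hm) as [_ E]. unfold branch_point, level. rewrite pow_add.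
    replace ((1 - x m) / (1 - rho) ^ m * ((1 - rho) ^ m * (1 - rho) ^ (k - m)))
      with ((1 - rho) ^ (k - m) * (1 - x m)) by (field; apply pow_nonzero; lra).
    lra. }
  apply functional_extensionality. intros n.
  rewrite (decoding_eq _ m) by (try assumption; rewrite HLt, Hbp by lia; assumption).
  rewrite HLt, Hbp by lia. apply invlim_iter. assumption.
Qed.

Lemma coding_shift_decoding t : 0 <= t <= 1 -> coding (shift f (decoding t)) = coded_shift rho t.
Proof.
  intros Ht. destruct (Req_dec t 0) as [->|Ht0].
  { rewrite decoding_0, coding_eq_0; [unfold coded_shift; field; lra|].
    intros [|m]; simpl; [rewrite Hfix|]; apply omega0_le_rho1. }
  assert (Ht' : 0 < t <= 1) by lra. pose proof (level_of_t_nonneg t Ht'). pose proof rho1_pos.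
  destruct (branch_point_escapes (level_of_t t)) as [M HM]; [assumption|].
  assert (HxM : decoding t M = branch_point (level_of_t t) M) by (apply decoding_branch; lra).
  rewrite (coding_eq _ (S M)).
  - unfold level. simpl shift. rewrite HxM.
    unfold branch_point, level_of_t, t_of_level, coded_shift.
    pose proof (pow_lt (1 - rho) M ltac:(lra)). assert (0 < 1 - rho * t) by nra.
    simpl. field. repeat split; try lra. intros E. nra.
  - apply shift_invlim; [exact fmap_maps_unit|]. apply decoding_invlim. lra.
  - simpl. lra.
Qed.

Lemma coding_gt_of_above_rho x j : in_invlim f x -> rho < x j -> (1 - rho) ^ j / 2 < coding x.
Proof.
  intros Hx Hj. pose proof (proj1 Hx j). rewrite (coding_eq x j) by (auto; lra).
  pose proof (pow_lt (1 - rho) j ltac:(lra)).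
  pose proof (pow_antimono (1 - rho) 0 j ltac:(lra) ltac:(lia)). simpl in *.
  unfold t_of_level, level.
  replace (1 / (1 + (1 - x j) / (1 - rho) ^ j)) with ((1 - rho) ^ j * / ((1 - rho) ^ j + (1 - x j)))
    by (field; lra).
  unfold Rdiv. apply Rmult_lt_compat_l; [assumption|]. apply Rinv_lt_contravar; lra.
Qed.

Lemma decoding_continuous_at_0 eps N : 0 < eps ->
  exists d, 0 < d /\ forall s n, 0 <= s <= 1 -> s < d -> (n <= N)%nat ->
    Rabs (decoding s n - omega0) < eps.
Proof.
  intros Heps. pose proof contraction_lt_1 as Hq.
  destruct (pow_lt_1_eventually contraction (eps / rho) Hq) as [J HJ].
  { apply Rdiv_lt_0_compat; lra. }
  exists ((1 - rho) ^ (N + 2 * J) / 2). split; [apply Rdiv_lt_0_compat; [apply pow_lt|]; lra|].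
  intros s n Hs Hsd Hn. pose proof (decoding_invlim s Hs) as Hinv.
  assert (Hle : decoding s (n + 2 * J)%nat <= rho).
  { apply Rnot_lt_le. intros Hgt. pose proof (coding_gt_of_above_rho _ _ Hinv Hgt).
    rewrite coding_decoding in * by assumption.
    pose proof (pow_antimono (1 - rho) (n + 2 * J) (N + 2 * J) ltac:(lra) ltac:(lia)). lra. }
  eapply Rle_lt_trans; [apply invlim_near_omega0; eassumption|].
  replace eps with (eps / rho * rho) by (field; lra). apply Rmult_lt_compat_r; lra.
Qed.

Lemma decoding_continuous_pos t eps : 0 < t <= 1 -> 0 < eps ->
  exists d, 0 < d /\ forall s n, 0 <= s <= 1 -> Rabs (s - t) < d ->
    Rabs (decoding s n - decoding t n) < eps.
Proof.
  intros Ht Heps. set (L := level_of_t t). pose proof (level_of_t_nonneg t Ht) as HL.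
  pose proof rho1_pos. destruct (branch_point_escapes L HL) as [M HM].
  pose proof lip_const_pos as HK. pose proof (pow_lt _ M HK) as HKM.
  set (eta := Rmin (branch_point L M - r1) (eps / lip_const ^ M)).
  assert (Heta : 0 < eta) by (apply Rmin_glb_lt; [lra|apply Rdiv_lt_0_compat; assumption]).
  exists (Rmin (t / 2) (eta * (t * t) / 4)).
  split; [apply Rmin_glb_lt; [lra|]; apply Rdiv_lt_0_compat; [apply Rmult_lt_0_compat|]; nra|].
  intros s n Hs Hst.
  pose proof (Rmin_l (t / 2) (eta * (t * t) / 4)). pose proof (Rmin_r (t / 2) (eta * (t * t) / 4)).
  destruct (Rabs_def2 _ _ Hst). assert (Hs' : 0 < s <= 1) by lra.
  pose proof (level_of_t_nonneg s Hs') as HLs.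
  assert (HdL : Rabs (level_of_t s - L) < eta).
  { eapply Rle_lt_trans; [apply level_of_t_close; lra|].
    apply (Rmult_lt_reg_r (t * t)); [nra|]. unfold Rdiv.
    rewrite Rmult_assoc, Rinv_l, Rmult_1_r by nra. lra. }
  assert (Heta1 : eta <= branch_point L M - r1) by apply Rmin_l.
  assert (Heta2 : eta <= eps / lip_const ^ M) by apply Rmin_r.
  assert (HMs : r1 < branch_point (level_of_t s) M).
  { pose proof (branch_point_close (level_of_t s) L M) as Hc.
    destruct (Rabs_def2 _ _ (Rle_lt_trans _ _ _ Hc HdL)). lra. }
  assert (Hunit : forall L', 0 <= L' -> r1 < branch_point L' M ->
                  0 <= branch_point L' (n + M) <= 1).
  { intros L' HL' HM'. split; [|apply branch_point_le_1; assumption].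
    pose proof (branch_point_mono L' M (n + M) HL' ltac:(lia)). lra. }
  rewrite (decoding_eq s M n), (decoding_eq t M n) by assumption. fold L.
  eapply Rle_lt_trans; [apply (iter_lipschitz f lip_const 0 1); auto;
    [lra|exact fmap_maps_unit|exact fmap_lipschitz]|].
  pose proof (branch_point_close (level_of_t s) L (n + M)).
  replace eps with (lip_const ^ M * (eps / lip_const ^ M)) by (field; lra).
  apply Rmult_lt_compat_l; [assumption|]. lra.
Qed.

Lemma decoding_continuous : cont_interval_to_seq decoding.
Proof.
  intros t Ht eps N Heps. destruct (Req_dec t 0) as [->|Ht0].
  - destruct (decoding_continuous_at_0 eps N Heps) as [d [Hd Hclose]].
    exists d. split; [assumption|]. intros s Hs Hsd n Hn. rewrite decoding_0.
    apply Hclose; [assumption| |assumption]. rewrite Rminus_0_r, Rabs_pos_eq in Hsd by lra. lra.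
  - destruct (decoding_continuous_pos t eps ltac:(lra) Heps) as [d [Hd Hclose]].
    exists d. split; [assumption|]. intros s Hs Hsd n _. auto.
Qed.

Lemma coding_const_omega0 : coding (fun _ => omega0) = 0.
Proof. apply coding_eq_0. intros _. apply omega0_le_rho1. Qed.

Lemma coding_const_1 : coding (fun _ => 1) = 1.
Proof.
  assert (Hinv : in_invlim f (fun _ => 1)).
  { split; intros; [lra|]. rewrite fmap_right by lra. unfold f1. field. lra. }
  rewrite (coding_eq _ 0%nat Hinv) by lra. unfold t_of_level, level. simpl. field.
Qed.

Lemma type_zero_iff_const x : in_invlim f x /\ of_type rho T_infty x <-> x = fun _ => omega0.
Proof.
  split.
  - intros [Hx Htype]. apply invlim_below_rho; [assumption|].
    assert (Hlow : forall m, 0 <= x (S m) <= rho)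
      by (intros m; apply (proj1 (Htype m)); reflexivity).
    intros [|m]; [|apply Hlow].
    rewrite <- (proj2 Hx 0%nat). apply fmap_maps_left, Hlow.
  - intros ->. split; [apply invlim_const_omega0|]. intros n. split; intros E; [lra|discriminate].
Qed.

End InverseLimit.

Theorem theorem2 (rho delta gamma alpha omega0 : R)
  (Hrho : 0 < rho < 1) (Hdelta : 0 < delta) (Hgamma : gamma > - delta / rho)
  (Halpha : - delta / rho < alpha < 0)
  (Homega : 0 <= omega0 < rho)
  (Hfix : fmap rho delta gamma alpha omega0 = omega0)
  (Hrho1 : rho > rho1 rho delta gamma alpha) :
  let f := fmap rho delta gamma alpha in
  (exists (h : seqR -> R) (hinv : R -> seqR),
     (forall x, in_invlim f x -> 0 <= h x <= 1 /\ hinv (h x) = x) /\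
     (forall t, 0 <= t <= 1 -> in_invlim f (hinv t) /\ h (hinv t) = t) /\
     cont_on_invlim (in_invlim f) h /\
     cont_interval_to_seq hinv /\
     (let g := fun t => h (shift f (hinv t)) in
      (forall t, 0 <= t <= 1 -> 0 <= g t <= 1) /\
      (forall s t, 0 <= s <= 1 -> 0 <= t <= 1 -> s < t -> g s < g t) /\
      (forall u, 0 <= u <= 1 -> exists t, 0 <= t <= 1 /\ g t = u) /\
      cont_interval g /\
      (forall t, 0 <= t <= 1 -> (g t = t <-> t = 0 \/ t = 1)) /\
      h (fun _ => omega0) = 0 /\ h (fun _ => 1) = 1))
  /\
  (forall x, (in_invlim f x /\ of_type rho T_infty x) <-> x = (fun _ => omega0)).
Proof.
  intros f. destruct Halpha as [_ Halpha_neg].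
  split; [|intros x; eapply type_zero_iff_const; eauto].
  set (h := coding rho delta gamma alpha). set (hinv := decoding rho delta gamma alpha omega0).
  assert (Hg : forall t, 0 <= t <= 1 -> h (shift f (hinv t)) = coded_shift rho t)
    by (intros; eapply coding_shift_decoding; eauto).
  exists h, hinv.
  split; [intros x Hx; split; [eapply coding_range|eapply decoding_coding]; eauto|].
  split; [intros t Ht; split; [eapply decoding_invlim|eapply coding_decoding]; eauto|].
  split; [eapply coding_continuous; eauto|].
  split; [eapply decoding_continuous; eauto|].
  intros g. split; [|split; [|split; [|split; [|split]]]].
  - intros t Ht. unfold g. rewrite Hg by assumption. apply coded_shift_range; assumption.
  - intros s t Hs Ht Hst. unfold g. rewrite !Hg by assumption.
    apply coded_shift_increasing; assumption.
  - intros u Hu. destruct (coded_shift_surjective rho u Hrho Hu) as [t [Ht Hgt]].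
    exists t. unfold g. rewrite Hg; auto.
  - apply (cont_interval_ext g (coded_shift rho)); [exact Hg|].
    apply coded_shift_continuous; assumption.
  - intros t Ht. unfold g. rewrite Hg by assumption. apply coded_shift_fixed; assumption.
  - split; [eapply coding_const_omega0|eapply coding_const_1]; eauto.
Qed.
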